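(* Under the standing assumptions, let $\lambda_*>0$. Then $J(u)\ge\lambda_*H(u)$ for all $u\in X$ if and only if $J^*(\zeta)\le\lambda_*^{1-q}H^*(\zeta)$ for all $\zeta\in X^*$. Moreover, if $u_*$ is a $p$-eigenvector of $J$ with subgradient $\zeta_*$ and eigenvalue $\lambda_*=\min_{u\ne0}R(u)$, then $R_*(\zeta_* )=\lambda_*^{1-q}=\max_{\zeta\ne0}R_*(\zeta)$, so both bounds are sharp.
   Context: Standing assumptions: $X$ is a real reflexive Banach space with dual $X^*$ and duality pairing $\langle\cdot,\cdot\rangle$; $\Gamma_0(X)$ is the class of proper, lower semi-continuous, convex functionals $X\to\mathbb{R}\cup\{+\infty\}$. Fix $1<p<\infty$ and $q=\frac{p}{p-1}$. Let $J\in\Gamma_0(X)$, and let $H\in\Gamma_0(X)$ be absolutely $p$-homogeneous ($H(tu)=|t|^pH(u)$) such that $|u|_H:=(pH(u))^{1/p}$ is a norm on $X$, so $H(u)=\frac1p|u|_H^p$. The dual norm is $|\zeta|_{H^*}=\sup_{u\ne0}\langle\zeta,u\rangle/|u|_H$, and $H^*(\zeta)=\frac1q|\zeta|_{H^*}^q$. The Fenchel conjugate is $J^*(\zeta)=\sup_{u\in X}\langle\zeta,u\rangle-J(u)$ and the subdifferential is $\partial J(u)=\{\zeta\in X^*:\ J(u)+\langle\zeta,v-u\rangle\le J(v)\ \forall v\in X\}$. Growth assumption: there is $c>0$ with $H(u)\le cJ(u)$ for all $u\in X$. The Rayleigh quotient is $R(u)=J(u)/H(u)$ for $u\ne0$ and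 the dual Rayleigh quotient is $R_*(\zeta)=J^*(\zeta)/H^*(\zeta)$ for $\zeta\ne0$. A $p$-eigenvector of $J$: $u\in X\setminus\{0\}$ with subgradient $\zeta\in\partial J(u)$ and eigenvalue $\lambda=R(u)\in\mathbb{R}$ such that $\zeta\in\lambda\,\partial H(u)$. *)

From HB Require Import structures.
From mathcomp Require Import all_boot all_order all_algebra.
From mathcomp Require Import all_classical all_reals all_analysis.
Set Implicit Arguments. Unset Strict Implicit. Unset Printing Implicit Defensive.
Import Order.TTheory GRing.Theory Num.Theory.
Import numFieldNormedType.Exports.
Local Open Scope classical_set_scope.
Local Open Scope ring_scope.

Section Defs.
Context {R : realType} {X : normedModType R}.

(* Elements of the topological dual X^* : continuous linear functionals.
   The duality pairing <z,u> is the application z u. *)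
Definition is_dual (z : X -> R) : Prop :=
  (forall (a : R) (u v : X), z (a *: u + v) = a * z u + z v) /\ continuous z.

Definition dual_bounded_by (z : X -> R) (M : R) : Prop :=
  forall u : X, `|z u| <= M * `|u|.

Definition reflexive_space : Prop :=
  forall phi : (X -> R) -> R,
    (forall (a : R) (z1 z2 : X -> R), is_dual z1 -> is_dual z2 ->
       phi (fun u => a * z1 u + z2 u) = a * phi z1 + phi z2) ->
    (exists C : R, forall (z : X -> R) (M : R), is_dual z -> 0 <= M ->
       dual_bounded_by z M -> `|phi z| <= C * M) ->
    exists x : X, forall z, is_dual z -> phi z = z x.

Local Open Scope ereal_scope.

Definition proper_fun (J : X -> \bar R) : Prop :=
  (exists u, J u < +oo) /\ (forall u, -oo < J u).

Definition convex_efun (J : X -> \bar R) : Prop :=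
  forall (u v : X) (t : R), (0 <= t <= 1)%R ->
    J (t *: u + (1 - t) *: v)%R <= t%:E * J u + (1 - t)%:E * J v.

Definition Gamma0 (J : X -> \bar R) : Prop :=
  proper_fun J /\ lower_semicontinuous J /\ convex_efun J.

Definition fenchel (J : X -> \bar R) (z : X -> R) : \bar R :=
  ereal_sup (range (fun u => (z u)%:E - J u)).

Definition subdiff (J : X -> \bar R) (u : X) (z : X -> R) : Prop :=
  is_dual z /\ forall v : X, J u + (z v - z u)%:E <= J v.

Definition abs_p_homogeneous (p : R) (H : X -> \bar R) : Prop :=
  forall (t : R) (u : X), H (t *: u)%R = (`|t| `^ p)%:E * H u.

Definition Hnorm (p : R) (H : X -> \bar R) (u : X) : R :=
  ((p * fine (H u)) `^ p^-1)%R.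

Definition is_norm (N : X -> R) : Prop :=
  (forall u, N u = 0%R -> u = 0%R) /\
  (forall (a : R) u, N (a *: u)%R = (`|a| * N u)%R) /\
  (forall u v, (N (u + v)%R <= N u + N v)%R).

Definition rayleigh (J H : X -> \bar R) (u : X) : \bar R :=
  J u * ((fine (H u))^-1)%:E.

Definition dual_rayleigh (J H : X -> \bar R) (z : X -> R) : \bar R :=
  fenchel J z * inve (fenchel H z).

Definition p_eigenvector (J H : X -> \bar R) (u : X) (z : X -> R) (lam : R)
  : Prop :=
  u <> 0%R /\ subdiff J u z /\ rayleigh J H u = lam%:E /\
  exists eta : X -> R, subdiff H u eta /\ forall v, z v = (lam * eta v)%R.

End Defs.

From HB Require Import structures.
From mathcomp Require Import all_boot all_order all_algebra.
From mathcomp Require Import all_classical all_reals all_analysis.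
From mathcomp Require Import ring lra.
Import Order.TTheory GRing.Theory Num.Theory.
Import numFieldNormedType.Exports.
Set Implicit Arguments. Unset Strict Implicit. Unset Printing Implicit Defensive.
Local Open Scope classical_set_scope.
Local Open Scope ring_scope.

(* If [J >= lam H], then [J^* <= (lam H)^*], and the substitution [u = s w]
   with [s = lam^(1-q)] turns [(lam H)^*(z)] into [s H^*(z)], because
   [lam s^p = s].  Conversely, given [u], extend the functional
   [t u |-> t |u|_H] by Hahn-Banach to some [f <= |.|_H] (continuous, as
   Baire's theorem bounds [|.|_H] by a multiple of the norm) and test the
   hypothesis at [z = a f], [a = lam |u|_H^(p-1)]: Young's inequality gives
   [H^*(a f) <= a^q / q], and [z u - J u <= J^*(z)] rearranges to
   [lam H(u) <= J(u)].  For an eigenvector [u] with subgradient [lam eta],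
   [eta] in [dH(u)], the Fenchel-Young equalities give
   [J^*(lam eta) = lam (eta u - H u)] and [H^*(lam eta) = lam^q (eta u - H u)],
   with [eta u > H u]; the quotient is [lam^(1-q)], which is the maximum of
   [R_*] by the first part. *)

Definition linear_form {R : numDomainType} {X : lmodType R} (g : X -> R) :=
  forall (a : R) u v, g (a *: u + v) = a * g u + g v.

Section LinearForm.
Context {R : numDomainType} {X : lmodType R} (g : X -> R).
Hypothesis lin_g : linear_form g.

Lemma linear_form0 : g 0 = 0.
Proof.
have := lin_g 1 0 0; rewrite scale1r addr0 mul1r => /(congr1 (fun x => x - g 0)).
by rewrite subrr addrK => <-.
Qed.

Lemma linear_formZ (a : R) u : g (a *: u) = a * g u.
Proof. by rewrite -[a *: u]addr0 lin_g linear_form0 addr0. Qed.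

Lemma linear_formB u v : g (u - v) = g u - g v.
Proof. by rewrite addrC -scaleN1r lin_g mulN1r addrC. Qed.

End LinearForm.

Section HahnBanach.
Context {R : realType} {X : lmodType R} (N : X -> R).
Hypothesis NZ : forall (a : R) u, N (a *: u) = `|a| * N u.
Hypothesis ND : forall u v, N (u + v) <= N u + N v.

Lemma seminorm0 : N 0 = 0.
Proof. by rewrite -(scale0r (0 : X)) NZ normr0 mul0r. Qed.

Lemma seminorm_ge0 u : 0 <= N u.
Proof.
have := ND u (- u); rewrite addrN seminorm0 -scaleN1r NZ normrN normr1 mul1r.
lra.
Qed.

(* Partial linear functionals are handled through their graphs, so that
   extensions are simply supersets and Zorn's lemma applies to inclusion. *)
Definition linear_graph (G : set (X * R)) :=
  forall (s : R) x a y b, G (x, a) -> G (y, b) -> G (s *: x + y, s * a + b).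

Definition dominated_graph (G : set (X * R)) := forall x a, G (x, a) -> a <= N x.

Variable u : X.

Definition norming_graph (G : set (X * R)) :=
  [/\ G (u, N u), linear_graph G & dominated_graph G].

Definition span_graph : set (X * R) := [set (t *: u, t * N u) | t in setT].

Lemma norming_graph0 G : norming_graph G -> G (0, 0).
Proof.
case=> Gu lG _; have := lG (-1) _ _ _ _ Gu Gu.
by rewrite scaleN1r addNr mulN1r addNr.
Qed.

Lemma norming_graphZ G (s : R) x a : norming_graph G -> G (x, a) -> G (s *: x, s * a).
Proof.
move=> NG Gx; case: (NG) => _ lG _.
by have := lG s _ _ _ _ Gx (norming_graph0 NG); rewrite !addr0.
Qed.

Lemma norming_graph_functional G x a b :
  norming_graph G -> G (x, a) -> G (x, b) -> a = b.
Proof.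
case=> _ lG dG ha hb.
have := dG _ _ (lG (-1) _ _ _ _ ha hb); have := dG _ _ (lG (-1) _ _ _ _ hb ha).
rewrite scaleN1r addNr seminorm0 !mulN1r; lra.
Qed.

Lemma norming_span_graph : norming_graph span_graph.
Proof.
split.
- by exists 1; rewrite ?scale1r ?mul1r.
- move=> s _ _ _ _ [t _ [<- <-]] [t' _ [<- <-]]; exists (s * t + t') => //.
  by rewrite scalerDl scalerA mulrDl mulrA.
- move=> _ _ [t _ [<- <-]]; rewrite NZ ler_wpM2r ?seminorm_ge0 //; exact: ler_norm.
Qed.

Lemma span_graph_sub G : norming_graph G -> span_graph `<=` G.
Proof.
by move=> NG _ [t _ <-]; case: (NG) => Gu _ _; exact: norming_graphZ.
Qed.

(* Any [c] between these bounds is an admissible value at [x0] for a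
   dominated extension of [G]. *)
Lemma norming_graph_gap G x0 : norming_graph G -> exists c : R,
  (forall x a, G (x, a) -> c <= N (x + x0) - a) /\
  (forall y b, G (y, b) -> b - N (y - x0) <= c).
Proof.
case=> Gu lG dG.
pose S : set R := [set r | exists y b, G (y, b) /\ r = b - N (y - x0)].
have gap x a y b : G (x, a) -> G (y, b) -> b - N (y - x0) <= N (x + x0) - a.
  move=> Gx Gy; have := dG _ _ (lG 1 _ _ _ _ Gx Gy).
  have := ND (x + x0) (y - x0); rewrite addrACA subrr addr0 scale1r mul1r; lra.
have G0 : G (0, 0) by exact: norming_graph0.
have S0 : S (0 - N (0 - x0)) by exists 0, 0.
have ubS x a : G (x, a) -> ubound S (N (x + x0) - a).
  by move=> Gx _ [y [b [Gy ->]]]; exact: gap.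
exists (sup S); split => [x a Gx|y b Gy].
  by apply: ge_sup; [exists (0 - N (0 - x0)) | exact: ubS].
by apply: ub_le_sup; [exists (N (0 + x0) - 0); exact: ubS | exists y, b].
Qed.

Lemma norming_graph_extend G x0 : norming_graph G ->
  exists2 G', norming_graph G' /\ G `<=` G' & exists c, G' (x0, c).
Proof.
move=> NG; have [c [cle cge]] := norming_graph_gap x0 NG.
case: (NG) => Gu lG dG.
pose G' : set (X * R) :=
  [set xa | exists t x a, G (x, a) /\ xa = (x + t *: x0, a + t * c)].
have G'E x a t : G (x, a) -> G' (x + t *: x0, a + t * c).
  by move=> Gx; exists t, x, a.
have G'G x a : G (x, a) -> G' (x, a).
  by move=> /(G'E _ _ 0); rewrite scale0r mul0r !addr0.
exists G'; last first.
  by exists c; have := G'E _ _ 1 (norming_graph0 NG); rewrite !add0r scale1r mul1r.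
split; last by move=> [x a]; exact: G'G.
split; first exact: G'G.
- move=> s _ _ _ _ [t [x [a [Gx [-> ->]]]]] [t' [y [b [Gy [-> ->]]]]].
  have -> : s *: (x + t *: x0) + (y + t' *: x0) = s *: x + y + (s * t + t') *: x0.
    by rewrite scalerDr scalerDl scalerA addrACA.
  have -> : s * (a + t * c) + (b + t' * c) = s * a + b + (s * t + t') * c.
    by rewrite mulrDr mulrDl mulrA addrACA.
  exact/G'E/lG.
- move=> _ _ [t [x [a [Gx [-> ->]]]]].
  have [t0|t0|->] := ltgtP t 0; last by rewrite scale0r mul0r !addr0; exact: dG.
  + have := cge _ _ (norming_graphZ (- t)^-1 NG Gx).
    have -> : (- t)^-1 *: x - x0 = (- t)^-1 *: (x + t *: x0).
      by rewrite scalerDr scalerA invrN mulNr mulVf ?lt_eqF // scaleN1r.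
    rewrite NZ gtr0_norm ?invr_gt0 ?oppr_gt0 // -mulrBr => h.
    have nt : 0 < - t by rewrite oppr_gt0.
    have := ler_wpM2l (ltW nt) h.
    rewrite mulrA mulfV ?gt_eqF // mul1r; lra.
  + have := cle _ _ (norming_graphZ t^-1 NG Gx).
    have -> : t^-1 *: x + x0 = t^-1 *: (x + t *: x0).
      by rewrite scalerDr scalerA mulVf ?gt_eqF // scale1r.
    rewrite NZ gtr0_norm ?invr_gt0 // -mulrBr => h.
    have := ler_wpM2l (ltW t0) h.
    rewrite mulrA mulfV ?gt_eqF // mul1r; lra.
Qed.

Lemma norming_graph_bigcup (A : set (set (X * R))) :
  (forall G, A G -> norming_graph G) -> total_on A subset -> A !=set0 ->
  norming_graph (\bigcup_(G in A) G).
Proof.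
move=> NA totA [G0 AG0]; split.
- by exists G0 => //; case: (NA _ AG0).
- move=> s x a y b [G1 AG1 G1x] [G2 AG2 G2y].
  have [sub|sub] := totA _ _ AG1 AG2.
    by exists G2 => //; case: (NA _ AG2) => _ lG2 _; apply: lG2 => //; exact: sub.
  by exists G1 => //; case: (NA _ AG1) => _ lG1 _; apply: lG1 => //; exact: sub.
- by move=> x a [G1 AG1 G1x]; case: (NA _ AG1) => _ _; apply.
Qed.

Lemma norming_graph_maximal : exists2 G, norming_graph G &
  forall G', norming_graph G' -> G `<=` G' -> G' `<=` G.
Proof.
pose T := {G : set (X * R) | norming_graph G}.
pose incl (G1 G2 : T) := `[< sval G1 `<=` sval G2 >].
have [[G NG] maxG] : exists G, premaximal incl G.
  apply: (ZL_preorder (exist _ _ norming_span_graph)) => [G|G1 G2 G3|C totC].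
  - exact/asboolP.
  - by move=> /asboolP s12 /asboolP s23; apply/asboolP => z /s12 /s23.
  pose A := span_graph |` (sval @` C).
  have NA G' : A G' -> norming_graph G'.
    by case=> [->|[G'' _ <-]]; [exact: norming_span_graph | exact: svalP].
  have spanA G' : A G' -> span_graph `<=` G' by move/NA/span_graph_sub.
  have totA : total_on A subset.
    move=> G1 G2 AG1 AG2; have [->|[S1 CS1 <-]] := AG1; first by left; exact: spanA.
    have [->|[S2 CS2 <-]] := AG2; first by right; apply: spanA; right; exists S1.
    by case: (totC _ _ CS1 CS2) => /asboolP; [left|right].
  have A0 : A span_graph by left.
  have NU := norming_graph_bigcup NA totA (ex_intro _ _ A0).
  exists (exist _ _ NU) => G' CG'; apply/asboolP => xa G'xa.
  by exists (sval G') => //; right; exists G'.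
exists G => // G' NG' GG'.
by have /asboolP := maxG (exist _ G' NG') (asboolT GG').
Qed.

Theorem hahn_banach_norming : exists f : X -> R,
  [/\ linear_form f, f u = N u & forall x, f x <= N x].
Proof.
have [G NG maxG] := norming_graph_maximal.
have allx x : exists a, G (x, a).
  have [G' [NG' GG'] [c G'c]] := norming_graph_extend x NG.
  by exists c; exact: maxG NG' GG' _ G'c.
have [f Gf] := choice allx; case: (NG) => Gu lG dG.
exists f; split => [a x y||x]; last exact: dG.
- exact: norming_graph_functional NG (Gf _) (lG _ _ _ _ _ (Gf x) (Gf y)).
- exact: norming_graph_functional NG (Gf _) Gu.
Qed.

End HahnBanach.

Section ConjugateExponent.
Context {R : realType} (p : R).
Hypothesis p1 : 1 < p.
Local Notation q := (p / (p - 1)).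

Lemma gt0_powRD (x r s : R) : 0 < x -> x `^ (r + s) = x `^ r * x `^ s.
Proof. by move=> x0; apply/powRD/implyP => _; exact: lt0r_neq0. Qed.

Lemma conj_exponent_gt0 : 0 < q.
Proof. by have := p1 => ?; apply: divr_gt0; lra. Qed.

Lemma conj_exponent_invD : q^-1 + p^-1 = 1.
Proof. by have := p1 => ?; field; lra. Qed.

Lemma powR_conj_scale (s : R) : 0 < s ->
  s * s `^ (p - 1)^-1 = s `^ q /\ (s `^ (p - 1)^-1) `^ p = s `^ q.
Proof.
move=> s0; rewrite -powRrM -{1}(powRr1 (ltW s0)) -gt0_powRD //.
by have := p1 => ?; split; congr (_ `^ _); field; lra.
Qed.

Lemma powR_dual_scale (lam : R) : 0 < lam ->
  lam * (lam `^ (1 - q)) `^ p = lam `^ (1 - q).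
Proof.
move=> l0; rewrite -powRrM -{1}(powRr1 (ltW l0)) -gt0_powRD //.
by have := p1 => ?; congr (_ `^ _); field; lra.
Qed.

Lemma powR_conj_norming (lam n : R) : 0 < lam -> 0 <= n ->
  lam `^ (1 - q) * (lam * n `^ (p - 1)) `^ q = lam * n `^ p.
Proof.
move=> l0 n0; rewrite powRM ?powR_ge0 ?(ltW l0) // -powRrM mulrA -gt0_powRD //.
rewrite subrK powRr1 ?(ltW l0) //; congr (_ * _ `^ _); have := p1 => ?; field; lra.
Qed.

Lemma powR_dual_ratio (lam d : R) : 0 < lam -> 0 < d ->
  lam * d / (lam `^ q * d) = lam `^ (1 - q).
Proof.
move=> l0 d0; rewrite gt0_powRD // powRN powRr1 ?(ltW l0) //.
by field; rewrite !gt_eqF ?powR_gt0.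
Qed.

Lemma half_powR_lt : 2^-1 `^ p < 2^-1 :> R.
Proof.
have p0 : 0 < p - 1 by have := p1 => ?; lra.
rewrite -[p](subrKC 1) gt0_powRD ?invr_gt0 // powRr1 ?invr_ge0 //.
rewrite gtr_pMr ?invr_gt0 //.
rewrite /powR gt_eqF ?invr_gt0 // expR_lt1 pmulr_rlt0 //.
by apply: ln_lt0; rewrite invr_gt0 invf_lt1 //=; lra.
Qed.

End ConjugateExponent.

Lemma bounded_linear_form_is_dual {R : realType} {X : normedModType R}
    (g : X -> R) (K : R) :
  linear_form g -> 0 <= K -> (forall x, `|g x| <= K * `|x|) -> is_dual g.
Proof.
move=> lg K0 bg; split => // x; apply/cvgrPdist_lt => e e0.
apply/nbhs_ballP; exists (e / (K + 1)); first by apply: divr_gt0 => //; lra.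
move=> y; rewrite -ball_normE /= -linear_formB // => xy.
apply: le_lt_trans (bg _) _.
have : K * `|x - y| <= K * (e / (K + 1)) by rewrite ler_wpM2l // ltW.
move/le_lt_trans; apply.
rewrite mulrCA gtr_pMr // ltr_pdivrMr; lra.
Qed.

Lemma lsc_bounded_on_ball {R : realType} {X : completeNormedModType R}
    (F : X -> \bar R) :
  lower_semicontinuous F -> (forall x, F x \is a fin_num) ->
  exists x0 (r : {posnum R}) (n : nat), forall y,
    ball x0 r%:num y -> (F y <= n%:R%:E)%E.
Proof.
move=> /lower_semicontinuousP lsc Ffin.
pose O n : set X := [set x | (n%:R%:E < F x)%E].
have [n nO] : exists n, ~ dense (O n).
  apply: contrapT => /forallNP allO.
  have : dense (\bigcap_n O n).
    by apply: Baire => n; split; [exact: lsc | exact: contrapT (allO n)].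
  have -> : \bigcap_n O n = set0.
    rewrite -subset0 => x /(_ (Num.truncn `|fine (F x)|).+1 I).
    rewrite /O /= -(fineK (Ffin x)) lte_fin.
    have := truncnS_gt `|fine (F x)|; have := ler_norm (fine (F x)); lra.
  by move=> /(_ setT) [||y []] //; [exists 0 | exact: openT].
have [U [[x0 /open_nbhs_nbhs /nbhs_ballP [r r0 ballO]] disj]] := denseNE nO.
exists x0, (PosNum r0), n => y /ballO Oy; rewrite leNgt; apply/negP => Fy.
by have : (set0 : set X) y by rewrite -disj.
Qed.

Lemma convex_even_bounded_ball0 {R : realType} {X : normedModType R}
    (F : X -> \bar R) x0 (r M : R) :
  convex_efun F -> (forall x, F (- x) = F x) ->
  (forall y, ball x0 r y -> (F y <= M%:E)%E) ->
  forall w, `|w| < r -> (F w <= M%:E)%E.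
Proof.
move=> cvx Feven Fb w wr.
have b1 : ball x0 r (x0 + w).
  by rewrite -ball_normE /ball_ /= opprD addrA subrr sub0r normrN.
have b2 : ball x0 r (x0 - w).
  by rewrite -ball_normE /ball_ /= opprD addrA subrr sub0r opprK.
have half : 0 <= (2^-1 : R) <= 1 by apply/andP; split; lra.
have := cvx (x0 + w) (w - x0) 2^-1 half.
have -> : (1 - 2^-1 : R) = 2^-1 by field.
have -> : 2^-1 *: (x0 + w) + 2^-1 *: (w - x0) = w.
  rewrite -scalerDr addrC addrA subrK scalerDr -scalerDl -[RHS]scale1r.
  by congr (_ *: _); lra.
move/le_trans; apply; rewrite -(opprB x0) Feven.
have h0 : (0 <= (2^-1 : R)%:E)%E by rewrite lee_fin; lra.
apply: le_trans (leeD (lee_wpmul2l h0 (Fb _ b1)) (lee_wpmul2l h0 (Fb _ b2))) _.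
by rewrite -!EFinM -EFinD lee_fin; lra.
Qed.

Section Fenchel.
Context {R : realType} {X : normedModType R}.
Local Open Scope ereal_scope.

Lemma le_fenchel (F G : X -> \bar R) z :
  (forall u, G u <= F u) -> fenchel F z <= fenchel G z.
Proof.
move=> GF; apply: ge_ereal_sup => _ [u _ <-].
apply: (@le_trans _ _ ((z u)%:E - G u)); first exact: leeB.
by apply: ereal_sup_ubound; exists u.
Qed.

Lemma fenchel_substitution (F G : X -> \bar R) (z y : X -> R) (r c : R) :
  r != 0%R -> (0 < c)%R ->
  (forall w, (z (r *: w))%:E - F (r *: w) = c%:E * ((y w)%:E - G w)) ->
  fenchel F z = c%:E * fenchel G y.
Proof.
move=> r0 c0 FG; rewrite /fenchel -ereal_sup_pZl //; congr ereal_sup.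
apply/seteqP; split => [_ [v _ <-]|_ [_ [w _ <-] <-]].
  exists ((y (r^-1 *: v))%:E - G (r^-1 *: v)); first by exists (r^-1 *: v).
  by rewrite -FG scalerA mulfV // scale1r.
by exists (r *: w).
Qed.

Lemma fenchel_subdiff (F : X -> \bar R) u z :
  F u \is a fin_num -> subdiff F u z -> fenchel F z = (z u)%:E - F u.
Proof.
move=> Fu [_ sF]; apply/eqP; rewrite eq_le; apply/andP; split; last first.
  by apply: ereal_sup_ubound; exists u.
apply: ge_ereal_sup => _ [v _ <-] /=; move: (sF v); rewrite -(fineK Fu).
case: (F v) => [a| |].
- by rewrite -EFinD -!EFinB !lee_fin; lra.
- by rewrite addeNy leNye.
- by rewrite -EFinD leeNy_eq.
Qed.

End Fenchel.

Lemma lee_mul_inve {R : realType} (a b : \bar R) (s : R) : (0 < s)%R ->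
  (0 <= b)%E -> (a <= s%:E * b)%E -> (a * b^-1 <= s%:E)%E.
Proof.
move=> s0; case: b => [b| _ _|]; last by rewrite leeNy_eq.
  rewrite lee_fin le_eqVlt => /predU1P[<-|b0] ab.
    rewrite mule0 in ab; rewrite inve0.
    by apply: le_trans (mule_le0_ge0 ab (leey _)) _; rewrite lee_fin ltW.
  by rewrite inver gt_eqF // lee_pdivrMr.
by rewrite invey mule0 lee_fin ltW.
Qed.

Lemma is_dualZ {R : realType} {X : normedModType R} (a : R) (f : X -> R) :
  is_dual f -> is_dual (fun v => a * f v).
Proof.
case=> lf cf; split => [b u v|x]; first by rewrite lf mulrDr mulrCA.
exact: cvgMl_tmp (cf x).
Qed.

Section PHomogeneous.
Context {R : realType} {X : normedModType R} (p : R) (H : X -> \bar R).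
Hypothesis p1 : 1 < p.
Hypothesis Hcvx : convex_efun H.
Hypothesis Hhom : abs_p_homogeneous p H.
Hypothesis Hfin : forall u, H u \is a fin_num.
Hypothesis Hnorm_norm : is_norm (Hnorm p H).
Local Notation q := (p / (p - 1)).

Let p_gt0 : 0 < p. Proof. by have := p1 => ?; lra. Qed.

Lemma H_EFin v : H v = (fine (H v))%:E.
Proof. by rewrite fineK. Qed.

Lemma fineHZ (t : R) v : fine (H (t *: v)) = `|t| `^ p * fine (H v).
Proof. by rewrite Hhom H_EFin. Qed.

Lemma HN v : H (- v) = H v.
Proof. by rewrite -scaleN1r Hhom normrN normr1 powR1 mul1e. Qed.

Lemma fineH0 : fine (H 0) = 0.
Proof.
by rewrite -(scale0r (0 : X)) fineHZ normr0 powR0 ?mul0r ?gt_eqF.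
Qed.

Lemma fineH_ge0 v : 0 <= fine (H v).
Proof.
have half : 0 <= (2^-1 : R) <= 1 by apply/andP; split; lra.
have := Hcvx v (- v) half.
have -> : 1 - 2^-1 = 2^-1 :> R by field.
rewrite scalerN subrr HN [H v]H_EFin [H 0]H_EFin fineH0 -!EFinM -EFinD lee_fin; lra.
Qed.

Lemma Hnorm_ge0 v : 0 <= Hnorm p H v.
Proof. exact: powR_ge0. Qed.

Lemma Hnorm_powR v : Hnorm p H v `^ p = p * fine (H v).
Proof.
rewrite /Hnorm -powRrM mulVf ?powRr1 ?gt_eqF //.
by rewrite mulr_ge0 ?fineH_ge0 ?ltW.
Qed.

Lemma fineH_gt0 v : v != 0 -> 0 < fine (H v).
Proof.
move=> v0; rewrite lt_def fineH_ge0 andbT; apply/eqP => hv; move/eqP: v0; apply.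
case: Hnorm_norm => N0 _; apply: N0.
by rewrite /Hnorm hv mulr0 powR0 // invr_eq0 gt_eqF.
Qed.

Local Open Scope ereal_scope.

Lemma fenchelH_ge0 z : linear_form z -> 0 <= fenchel H z.
Proof.
move=> lz; apply: ereal_sup_ubound; exists 0%R => //.
by rewrite linear_form0 // [H 0%R]H_EFin fineH0 -EFinB subrr.
Qed.

Lemma fenchelHZ (s : R) z : (0 < s)%R -> linear_form z ->
  fenchel H (fun v => s * z v)%R = (s `^ q)%:E * fenchel H z.
Proof.
move=> s0 lz; have [sr rp] := powR_conj_scale p1 s0.
have r0 : (0 < s `^ (p - 1)^-1)%R by exact: powR_gt0.
apply: (fenchel_substitution (r := s `^ (p - 1)^-1)) => [||w].
- by rewrite gt_eqF.
- exact: powR_gt0.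
rewrite (linear_formZ lz) [H _]H_EFin [H w]H_EFin fineHZ gtr0_norm // mulrA.
by rewrite sr rp -!EFinB -EFinM mulrBr.
Qed.

Lemma fenchelH_norming_le f (a : R) : (0 <= a)%R ->
  (forall x, f x <= Hnorm p H x)%R ->
  fenchel H (fun v => a * f v)%R <= (a `^ q / q)%:E.
Proof.
move=> a0 fN; apply: ge_ereal_sup => _ [v _ <-]; rewrite [H v]H_EFin -EFinB lee_fin.
have := conjugate_powR a0 (Hnorm_ge0 v) (conj_exponent_gt0 p1) p_gt0
  (conj_exponent_invD p1).
rewrite Hnorm_powR mulrAC mulfV ?gt_eqF // mul1r.
by have := ler_wpM2l a0 (fN v); lra.
Qed.

Lemma fenchel_le_of_ge (J : X -> \bar R) (lam : R) : (0 < lam)%R ->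
  (forall u, lam%:E * H u <= J u) -> forall z, linear_form z ->
  fenchel J z <= (lam `^ (1 - q))%:E * fenchel H z.
Proof.
move=> l0 JH z lz; apply: le_trans (le_fenchel z JH) _.
set s := (lam `^ (1 - q))%R; have s0 : (0 < s)%R by exact: powR_gt0.
rewrite (fenchel_substitution (G := H) (y := z) (r := s) (c := s)) ?gt_eqF // => w.
rewrite [H _]H_EFin [H w]H_EFin fineHZ gtr0_norm // (linear_formZ lz).
by rewrite -!EFinM -!EFinB mulrA powR_dual_scale // mulrBr.
Qed.

Lemma subdiff_H_gt v eta : v != 0%R -> subdiff H v eta -> (fine (H v) < eta v)%R.
Proof.
move=> v0 [[leta _] sH]; have hv := fineH_gt0 v0.
have := sH (2^-1 *: v); rewrite [H v]H_EFin [H (_ *: _)]H_EFin -EFinD lee_fin.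
rewrite fineHZ gtr0_norm ?invr_gt0 // (linear_formZ leta).
have : (2^-1 `^ p * fine (H v) < 2^-1 * fine (H v))%R.
  by rewrite ltr_pM2r // half_powR_lt.
lra.
Qed.

Lemma fenchelH_subdiff v eta :
  subdiff H v eta -> fenchel H eta = (eta v - fine (H v))%:E.
Proof. by move=> sH; rewrite (fenchel_subdiff (Hfin v) sH) [H v]H_EFin. Qed.

Lemma rayleigh_eqE (J : X -> \bar R) u lam : u != 0%R -> -oo < J u ->
  rayleigh J H u = lam%:E -> J u = (lam * fine (H u))%:E.
Proof.
move=> u0; have hu := fineH_gt0 u0; rewrite /rayleigh.
case: (J u) => [j _| _ |//].
  move=> /(@EFin_inj _ (j * (fine (H u))^-1)%R) <-.
  by rewrite -mulrA mulVf ?mulr1 ?gt_eqF.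
by rewrite mulyr gtr0_sg ?invr_gt0 // mul1e.
Qed.

Lemma dual_rayleigh_eigen (J : X -> \bar R) us zs lam : (0 < lam)%R ->
  (forall v, -oo < J v) -> p_eigenvector J H us zs lam ->
  dual_rayleigh J H zs = (lam `^ (1 - q))%:E.
Proof.
move=> l0 Jp [/eqP us0 [sJ [ray [eta [sH zsE]]]]].
have Ju := rayleigh_eqE us0 (Jp us) ray.
have gap : (0 < eta us - fine (H us))%R by rewrite subr_gt0; exact: subdiff_H_gt sH.
have FJ : fenchel J zs = (lam * (eta us - fine (H us)))%:E.
  by rewrite (fenchel_subdiff _ sJ) ?Ju // zsE -EFinB mulrBr.
have FH : fenchel H zs = (lam `^ q * (eta us - fine (H us)))%:E.
  have -> : zs = (fun v => lam * eta v)%R by apply: funext.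
  by rewrite fenchelHZ ?(fenchelH_subdiff sH) //; case: sH => [[]].
rewrite /dual_rayleigh FJ FH inver gt_eqF ?mulr_gt0 ?powR_gt0 // -EFinM.
by rewrite powR_dual_ratio.
Qed.

Lemma dual_rayleigh_le (J : X -> \bar R) lam : (0 < lam)%R ->
  (forall u, lam%:E * H u <= J u) -> forall z, is_dual z ->
  dual_rayleigh J H z <= (lam `^ (1 - q))%:E.
Proof.
move=> l0 JH z [lz _]; apply: lee_mul_inve; first exact: powR_gt0.
  exact: fenchelH_ge0.
exact: fenchel_le_of_ge.
Qed.

Lemma rayleigh_min_le (J : X -> \bar R) lam : 0 <= J 0%R ->
  (forall u, u <> 0%R -> lam%:E <= rayleigh J H u) ->
  forall u, lam%:E * H u <= J u.
Proof.
move=> J0 Jmin u; have [->|u0] := eqVneq u 0%R.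
  by rewrite [H 0%R]H_EFin fineH0 mule0.
have hu := fineH_gt0 u0.
have hu0 : 0 <= (fine (H u))%:E by rewrite lee_fin ltW.
have := lee_wpmul2r hu0 (Jmin u (elimN eqP u0)).
rewrite /rayleigh -muleA -[X in _ <= J u * X]EFinM mulVf ?gt_eqF //.
by rewrite mule1 [H u]H_EFin.
Qed.

End PHomogeneous.

Section Banach.
Context {R : realType} {X : completeNormedModType R} (p : R) (H : X -> \bar R).
Hypothesis p1 : 1 < p.
Hypothesis Hlsc : lower_semicontinuous H.
Hypothesis Hcvx : convex_efun H.
Hypothesis Hhom : abs_p_homogeneous p H.
Hypothesis Hfin : forall u, H u \is a fin_num.
Hypothesis Hnorm_norm : is_norm (Hnorm p H).
Local Notation q := (p / (p - 1)).
Local Notation N := (Hnorm p H).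

Let p_gt0 : 0 < p. Proof. by have := p1 => ?; lra. Qed.

(* By Baire, [H] is bounded on some ball, hence (being even and convex) on
   a ball around [0]; homogeneity spreads the bound over the whole space. *)
Lemma Hnorm_le_norm : exists2 K : R, 0 <= K & forall x, N x <= K * `|x|.
Proof.
have [x0 [r [n Hb]]] := lsc_bounded_on_ball Hlsc Hfin.
set M := (p * n%:R) `^ p^-1.
have NM w : `|w| < r%:num -> N w <= M.
  move=> /(convex_even_bounded_ball0 Hcvx (HN Hhom) Hb).
  rewrite [H w](H_EFin Hfin) lee_fin => Hw; apply: ge0_ler_powR.
  - by rewrite invr_ge0 ltW.
  - by rewrite nnegrE mulr_ge0 ?(fineH_ge0 p1 Hcvx Hhom Hfin) // ltW.
  - by rewrite nnegrE mulr_ge0 // ltW.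
  - by rewrite ler_pM2l.
have [_ [NZ _]] := Hnorm_norm.
exists (2 * M / r%:num) => [|x]; first by rewrite divr_ge0 ?mulr_ge0 ?powR_ge0.
have [->|x0n] := eqVneq x 0.
  by rewrite normr0 mulr0 -(scale0r (0 : X)) NZ normr0 mul0r.
have xp : 0 < `|x| by rewrite normr_gt0.
set t := r%:num / (2 * `|x|); have tp : 0 < t by rewrite divr_gt0 ?mulr_gt0.
have r0 : 0 < r%:num by [].
have tx : `|t *: x| < r%:num.
  have -> : `|t *: x| = r%:num / 2.
    by rewrite normrZ gtr0_norm // /t; field; rewrite gt_eqF.
  lra.
have := NM _ tx; rewrite NZ gtr0_norm // => tN.
have -> : 2 * M / r%:num * `|x| = t^-1 * M.
  by rewrite /t invf_div; field; rewrite gt_eqF.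
by rewrite -(ler_pM2l tp) mulrA mulfV ?gt_eqF ?mul1r.
Qed.

Lemma exists_norming_dual u :
  exists f, [/\ is_dual f, f u = N u & forall x, f x <= N x].
Proof.
have [N0 [NZ ND]] := Hnorm_norm.
have [f [lf fu fN]] := hahn_banach_norming NZ ND u.
have [K K0 NK] := Hnorm_le_norm.
exists f; split => //; apply: (bounded_linear_form_is_dual lf K0) => x.
rewrite ler_norml (le_trans (fN x) (NK x)) andbT lerNl.
have := fN (- x); rewrite -scaleN1r (linear_formZ lf) NZ normrN normr1 !mulN1r mul1r.
by move/le_trans; apply.
Qed.

Lemma ge_of_fenchel_le (J : X -> \bar R) (lam : R) : 0 < lam ->
  (forall u, (-oo < J u)%E) ->
  (forall z, is_dual z -> (fenchel J z <= (lam `^ (1 - q))%:E * fenchel H z)%E) ->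
  forall u, (lam%:E * H u <= J u)%E.
Proof.
move=> l0 Jp JH u.
have [f [df fu fN]] := exists_norming_dual u.
set n := N u; set a := lam * n `^ (p - 1); set m := lam * n `^ p.
have n0 : 0 <= n by exact: Hnorm_ge0.
have a0 : 0 <= a by rewrite mulr_ge0 ?powR_ge0 // ltW.
have an : a * n = m by rewrite /a /m -mulrA (mulrC _ n) mulr_powRB1.
have zJ : ((a * f u)%:E - J u <= fenchel J (fun v => a * f v)%R)%E.
  by apply: ereal_sup_ubound; exists u.
have zH := fenchelH_norming_le p1 Hcvx Hhom Hfin a0 fN.
have s0 : (0 <= (lam `^ (1 - q))%:E)%E by rewrite lee_fin powR_ge0.
have := le_trans zJ (le_trans (JH _ (is_dualZ a df)) (lee_wpmul2l s0 zH)).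
rewrite -EFinM mulrA powR_conj_norming // fu -/n an.
have Hu : (lam%:E * H u)%E = (m / p)%:E.
  rewrite [H u](H_EFin Hfin) -EFinM /m /n (Hnorm_powR p1 Hcvx Hhom Hfin).
  by congr EFin; field; rewrite gt_eqF.
rewrite Hu; have := Jp u; case: (J u) => [j _| |] //; last by rewrite leey.
rewrite -EFinB !lee_fin.
have -> : m / q = m - m / p by have := p1 => ?; field; lra.
lra.
Qed.

End Banach.

Local Open Scope ereal_scope.

Theorem lemma2p2 (R : realType) (X : completeNormedModType R)
  (p : R) (J H : X -> \bar R) (lam : R) :
  reflexive_space (X := X) ->
  (1 < p)%R ->
  Gamma0 J -> Gamma0 H ->
  abs_p_homogeneous p H ->
  (forall u, H u \is a fin_num) ->
  is_norm (Hnorm p H) ->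
  (exists c : R, (0 < c)%R /\ forall u, H u <= c%:E * J u) ->
  (0 < lam)%R ->
  let q := (p / (p - 1))%R in
  ((forall u : X, lam%:E * H u <= J u) <->
   (forall z : X -> R, is_dual z ->
      fenchel J z <= (lam `^ (1 - q))%:E * fenchel H z)) /\
  (forall (us : X) (zs : X -> R),
     p_eigenvector J H us zs lam ->
     (forall u : X, u <> 0%R -> lam%:E <= rayleigh J H u) ->
     dual_rayleigh J H zs = (lam `^ (1 - q))%:E /\
     (forall z : X -> R, is_dual z -> z <> (fun _ => 0%R) ->
        dual_rayleigh J H z <= (lam `^ (1 - q))%:E)).
Proof.
move=> _ p1 [[_ Jp] _] [_ [Hlsc Hcvx]] Hhom Hfin Hnorm_norm [c [c0 HcJ]] l0 q.
have J0 : 0 <= J 0%R.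
  by have := HcJ 0%R; rewrite (H_EFin Hfin) (fineH0 p1 Hhom Hfin) pmule_rge0.
split.
  split=> [JH z [lz _]|].
  - exact: (fenchel_le_of_ge p1 Hhom Hfin).
  - exact: (ge_of_fenchel_le p1 Hlsc Hcvx Hhom Hfin Hnorm_norm).
move=> us zs eig Jmin; split.
  exact: (dual_rayleigh_eigen p1 Hcvx Hhom Hfin Hnorm_norm l0 Jp eig).
move=> z dz _; apply: (dual_rayleigh_le p1 Hhom Hfin l0) => //.
exact: (rayleigh_min_le p1 Hcvx Hhom Hfin Hnorm_norm J0 Jmin).
Qed.
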